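(* Let $G$ be a mixed signed, directed graph on vertices $\{1,\dots,n\}$ with $m$ directed edges, and let $\widetilde{G}$ be its augmented signed graph, with artificial vertices indexed $t_1,\dots,t_m$. Regard $k[\widetilde{G}]\subseteq k[x_1^{\pm1},\dots,x_n^{\pm1},t_1^{\pm1},\dots,t_m^{\pm1}]$ and $k[G]\subseteq k[x_1^{\pm1},\dots,x_n^{\pm1}]$, and let $k(\widetilde G)$, $k(G)$ be their fraction fields inside $k(x_1,\dots,x_n,t_1,\dots,t_m)$. Then $k(\widetilde{G})\cap k(x_1,\dots,x_n)=k(G)$.
   Context: $k$ is a field. A mixed signed, directed graph $G$ on vertex set $\{1,\dots,n\}$ has a set of signed edges $+ij$ or $-ij$ (loops $\pm ii$ allowed) and directed edges $(i,j)$ with $i\ne j$; between a pair of vertices any subset of $+ij,-ij,(i,j),(j,i)$ may occur. Define $\rho(\pm ij)=\pm(e_i+e_j)$ (so $\rho(\pm ii)=\pm2e_i$) and $\rho((i,j))=e_j-e_i$ in $\mathbb{R}^n$. The edge ring is $k[G]=k[x^a: a\in\rho(E(G))]$ with $x^a=\prod x_i^{a_i}$. The augmented signed graph $\widetilde G$ is the signed graph obtained by replacing each directed edge $(i,j)$ by a new (artificial) vertex $t_{(i,j)}$ and the two edges $-i\,t_{(i,j)}$ and $+t_{(i,j)}\,j$; its edge ring is defined in the same way using variables $x_1,\dots,x_n$ and $t_1,\dots,t_m$ for the artificial vertices. *)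

From HB Require Import structures.
From mathcomp Require Import all_boot all_order all_algebra fraction.
Set Implicit Arguments. Unset Strict Implicit. Unset Printing Implicit Defensive.
Import Order.TTheory GRing.Theory Num.Theory.
Local Open Scope ring_scope.

(* Polynomial ring in N variables over an integral domain R, built as an
   iterated univariate polynomial ring: R[z_0,...,z_{N-1}]. *)
Fixpoint mpoly (R : idomainType) (N : nat) : idomainType :=
  if N is N'.+1 then ({poly mpoly R N'} : idomainType) else R.

(* the variable z_i (meaningful for i < N) *)
Fixpoint mvar (R : idomainType) (N : nat) (i : nat) : mpoly R N :=
  match N return mpoly R N with
  | 0 => 0
  | N'.+1 => if i == N' then 'X else (@mvar R N' i)%:P
  end.

Fixpoint mconst (R : idomainType) (N : nat) (c : R) : mpoly R N :=
  match N return mpoly R N with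
  | 0 => c
  | N'.+1 => (@mconst R N' c)%:P
  end.

Definition ratfun (k : fieldType) (N : nat) : fieldType := {fraction mpoly k N}.

Definition rvar (k : fieldType) (N : nat) (i : 'I_N) : ratfun k N :=
  FracField.tofrac (@mvar k N i).
Definition rconst (k : fieldType) (N : nat) (c : k) : ratfun k N :=
  FracField.tofrac (@mconst k N c).

Definition monomial (k : fieldType) (N : nat) (a : 'I_N -> int) : ratfun k N :=
  \prod_(i < N) @rvar k N i ^ (a i).

Inductive in_kalg (k : fieldType) (N : nat) (S : ratfun k N -> Prop)
  : ratfun k N -> Prop :=
| kalg_const c : in_kalg S (@rconst k N c)
| kalg_gen y : S y -> in_kalg S y
| kalg_add y z : in_kalg S y -> in_kalg S z -> in_kalg S (y + z)
| kalg_mul y z : in_kalg S y -> in_kalg S z -> in_kalg S (y * z).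

Definition in_kfrac (k : fieldType) (N : nat) (S : ratfun k N -> Prop)
  (f : ratfun k N) : Prop :=
  exists a b, [/\ in_kalg S a, in_kalg S b, b != 0 & f = a / b].

(* Edge vectors rho. A signed edge is (s, i, j) with s = true for +ij and
   s = false for -ij (loops i = j allowed); a directed edge is (i, j). *)
Definition rho_s (N : nat) (e : bool * 'I_N * 'I_N) : 'I_N -> int :=
  fun v => (if e.1.1 then 1 else -1) * ((v == e.1.2)%:Z + (v == e.2)%:Z).
Definition rho_d (N : nat) (e : 'I_N * 'I_N) : 'I_N -> int :=
  fun v => (v == e.2)%:Z - (v == e.1)%:Z.

(* A mixed signed, directed graph on {1..n} with m directed edges:
   S = set of signed edges, d : 'I_m -> 'I_n * 'I_n enumerates the
   directed edges (injective, no loops). *)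
Definition mixed_graph_wf (n m : nat) (S : {set bool * 'I_n * 'I_n})
  (d : 'I_m -> 'I_n * 'I_n) : Prop :=
  injective d /\ (forall e, (d e).1 != (d e).2).

(* vertices of the augmented graph: 'I_(n+m); x_i = lshift m i,
   t_e = rshift n e *)
Definition xv (n m : nat) (i : 'I_n) : 'I_(n + m) := lshift m i.
Definition tv (n m : nat) (e : 'I_m) : 'I_(n + m) := rshift n e.

Definition aug_edges (n m : nat) (S : {set bool * 'I_n * 'I_n})
  (d : 'I_m -> 'I_n * 'I_n) : {set bool * 'I_(n + m) * 'I_(n + m)} :=
  [set e | [|| [exists s in S, e == (s.1.1, @xv n m s.1.2, @xv n m s.2)],
               [exists t, e == (false, @xv n m (d t).1, @tv n m t)]
             | [exists t, e == (true, @tv n m t, @xv n m (d t).2)]]].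

Definition ext0 (n m : nat) (a : 'I_n -> int) : 'I_(n + m) -> int :=
  fun v => match split v with inl i => a i | inr _ => 0 end.

Definition gens_G (k : fieldType) (n m : nat) (S : {set bool * 'I_n * 'I_n})
  (d : 'I_m -> 'I_n * 'I_n) (f : ratfun k (n + m)) : Prop :=
  (exists2 e, e \in S & f = @monomial k (n + m) (@ext0 n m (@rho_s n e)))
  \/ (exists t, f = @monomial k (n + m) (@ext0 n m (@rho_d n (d t)))).

Definition gens_aug (k : fieldType) (n m : nat) (S : {set bool * 'I_n * 'I_n})
  (d : 'I_m -> 'I_n * 'I_n) (f : ratfun k (n + m)) : Prop :=
  exists2 e, e \in aug_edges S d & f = @monomial k (n + m) (@rho_s (n + m) e).

Definition gens_x (k : fieldType) (n m : nat) (f : ratfun k (n + m)) : Prop :=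
  exists i : 'I_n, f = @rvar k (n + m) (@xv n m i).

From HB Require Import structures.
From mathcomp Require Import all_boot all_order all_algebra fraction.
Set Implicit Arguments. Unset Strict Implicit. Unset Printing Implicit Defensive.
Import Order.TTheory GRing.Theory Num.Theory.
Local Open Scope ring_scope.

(* Since the signed edge +t j of G~ has monomial u_t x^(e_j - e_i) with u_t = x_i t_t,
   k(G~) is k(G) with u_1, ..., u_m adjoined.  Each u_e is a nonzero element of
   k(x, t_1, ..., t_(e-1)) times the fresh variable t_e, hence transcendental over that field.
   If f lies in k(x) and in k(G)(u_1, ..., u_e), write f = A/B with A, B Laurent polynomials
   in u_e over k[G][u_1, ..., u_(e-1)]; then f Q(u_e) = P(u_e) for polynomials P, Q, and
   transcendence forces f Q = P coefficientwise, so f = P_i / Q_i lies in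
   k(G)(u_1, ..., u_(e-1)).  Induction on e gives k(G~) ∩ k(x) = k(G). *)

Section PolynomialsInFewVariables.
Variable k : fieldType.

Fixpoint mpoly_below (M N : nat) : mpoly k N -> Prop :=
  match N return mpoly k N -> Prop with
  | 0 => fun _ => True
  | N'.+1 => fun p => (M <= N')%N -> exists2 c, @mpoly_below M N' c & p = c%:P
  end.

Lemma mpoly_belowD M N p q :
  @mpoly_below M N p -> mpoly_below M q -> mpoly_below M (p + q).
Proof.
elim: N p q => //= N IH p q Hp Hq MN.
have [a Ha ->] := Hp MN; have [b Hb ->] := Hq MN.
by exists (a + b); [exact: IH | rewrite polyCD].
Qed.

Lemma mpoly_belowM M N p q :
  @mpoly_below M N p -> mpoly_below M q -> mpoly_below M (p * q).
Proof.
elim: N p q => //= N IH p q Hp Hq MN.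
have [a Ha ->] := Hp MN; have [b Hb ->] := Hq MN.
by exists (a * b); [exact: IH | rewrite polyCM].
Qed.

Lemma mpoly_below_mconst M N c : @mpoly_below M N (mconst N c).
Proof. by elim: N => //= N IH _; exists (mconst N c). Qed.

Lemma mpoly_below_mvar M N i : (i < M)%N -> @mpoly_below M N (mvar k N i).
Proof.
move=> iM; elim: N => //= N IH MN.
by rewrite ltn_eqF ?(leq_trans iM MN) //; exists (mvar k N i).
Qed.

Lemma mvar_neq0 N i : (i < N)%N -> mvar k N i != 0.
Proof.
elim: N => //= N IH iN; case: ifP => [_|/negbT neq_iN].
  by rewrite -size_poly_eq0 size_polyX.
by rewrite polyC_eq0 IH // ltn_neqAle neq_iN -ltnS.
Qed.

Lemma mpoly_below_mvar_indep N M s (a : 'I_s -> mpoly k N) :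
  (M < N)%N -> (forall i, mpoly_below M (a i)) ->
  \sum_(i < s) a i * mvar k N M ^+ i = 0 -> forall i, a i = 0.
Proof.
elim: N a => // N IH a MN Ha Hsum.
have MN' : (M <= N)%N by rewrite -ltnS.
have /fin_all_exists2 [c Hc Ea] := fun i => Ha i MN'.
move=> i; rewrite Ea; apply/eqP; rewrite polyC_eq0; apply/eqP.
have {Hsum} : \sum_(j < s) (c j)%:P * (mvar k N.+1 M) ^+ j = 0.
  by apply: etrans Hsum; apply: eq_bigr => j _; rewrite Ea.
rewrite /=; case: eqP => [_ | /eqP neq_MN] Hsum.
  have /(congr1 (fun p : {poly mpoly k N} => p`_i)) := Hsum.
  rewrite coef_sum (bigD1 i) //= coefCM coefXn eqxx mulr1 coef0 big1 ?addr0 //.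
  by move=> j neq_ji; rewrite coefCM coefXn eq_sym (inj_eq val_inj) (negbTE neq_ji) mulr0.
apply: (IH c) => //; first by rewrite ltn_neqAle neq_MN.
apply/eqP; rewrite -polyC_eq0 rmorph_sum; apply/eqP; apply: etrans Hsum.
by apply: eq_bigr => j _; rewrite rmorphM rmorphXn.
Qed.

End PolynomialsInFewVariables.

Section Subalgebras.
Variables (k : fieldType) (N : nat).
Local Notation Om := (ratfun k N).
Implicit Types (T : Om -> Prop) (y f : Om).

Lemma mconstN M (c : k) : mconst M (- c) = - mconst M c.
Proof. by elim: M => [|M /= ->]; rewrite ?polyCN. Qed.

Lemma mconst_natr M (i : nat) : mconst M (i%:R : k) = i%:R.
Proof. by elim: M => [|M /= ->]; rewrite ?polyC_natr. Qed.

Lemma kalg_natr T (i : nat) : in_kalg T i%:R.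
Proof. by have := kalg_const T i%:R; rewrite /rconst mconst_natr tofracMn tofrac1. Qed.

Lemma kalg_opp T y : in_kalg T y -> in_kalg T (- y).
Proof.
move=> Ty; rewrite -mulN1r; apply: kalg_mul Ty.
by have := kalg_const T (- 1%:R); rewrite /rconst mconstN mconst_natr tofracN tofrac1.
Qed.

Lemma kalg_sum T (I : Type) (r : seq I) (F : I -> Om) :
  (forall i, in_kalg T (F i)) -> in_kalg T (\sum_(i <- r) F i).
Proof. by move=> TF; elim/big_ind: _ => //; [exact: (kalg_natr T 0) | exact: kalg_add]. Qed.

Lemma kalg_prod T (I : Type) (r : seq I) (P : pred I) (F : I -> Om) :
  (forall i, in_kalg T (F i)) -> in_kalg T (\prod_(i <- r | P i) F i).
Proof. by move=> TF; elim/big_ind: _ => //; [exact: (kalg_natr T 1) | exact: kalg_mul]. Qed.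

Lemma kfrac_kalg T y : in_kalg T y -> in_kfrac T y.
Proof. by exists y, 1; split; rewrite ?divr1 ?oner_neq0 //; exact: (kalg_natr T 1). Qed.

Lemma kfrac_add T f g : in_kfrac T f -> in_kfrac T g -> in_kfrac T (f + g).
Proof.
move=> [a [b [Ta Tb b0 ->]]] [c [d [Tc Td d0 ->]]].
exists (a * d + c * b), (b * d); split; rewrite ?mulf_neq0 ?addf_div //.
  by apply: kalg_add; apply: kalg_mul.
exact: kalg_mul.
Qed.

Lemma kfrac_opp T f : in_kfrac T f -> in_kfrac T (- f).
Proof.
by move=> [a [b [Ta Tb b0 ->]]]; exists (- a), b; rewrite mulNr; split => //; exact: kalg_opp.
Qed.

Lemma kfrac_mul T f g : in_kfrac T f -> in_kfrac T g -> in_kfrac T (f * g).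
Proof.
move=> [a [b [Ta Tb b0 ->]]] [c [d [Tc Td d0 ->]]].
by exists (a * c), (b * d); split; rewrite ?mulf_neq0 ?mulf_div //; exact: kalg_mul.
Qed.

Lemma kfrac_inv T f : in_kfrac T f -> in_kfrac T f^-1.
Proof.
move=> [a [b [Ta Tb b0 ->]]]; have [->|a0] := eqVneq a 0.
  by rewrite mul0r invr0; apply: kfrac_kalg; exact: (kalg_natr T 0).
by exists b, a; rewrite invf_div.
Qed.

Lemma kfrac_expz T f (z : int) : in_kfrac T f -> in_kfrac T (f ^ z).
Proof.
move=> Tf; have Tfn i : in_kfrac T (f ^+ i).
  elim: i => [|i IH]; last by rewrite exprS; exact: kfrac_mul.
  by apply: kfrac_kalg; exact: (kalg_natr T 1).
by case: z => i; [exact: Tfn | apply: kfrac_inv].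
Qed.

Lemma kfrac_prod T (I : Type) (r : seq I) (F : I -> Om) :
  (forall i, in_kfrac T (F i)) -> in_kfrac T (\prod_(i <- r) F i).
Proof.
move=> TF; elim/big_ind: _ => //; last exact: kfrac_mul.
by apply: kfrac_kalg; exact: (kalg_natr T 1).
Qed.

Lemma kfrac_sub T T' : (forall y, T y -> in_kfrac T' y) ->
  forall f, in_kfrac T f -> in_kfrac T' f.
Proof.
move=> TT'; have kalgT y : in_kalg T y -> in_kfrac T' y.
  elim=> {y} [c|y /TT' //|y z _ ? _ ?|y z _ ? _ ?]; last exact: kfrac_mul.
    by apply: kfrac_kalg; exact: kalg_const.
  exact: kfrac_add.
by move=> f [a [b [Ta Tb _ ->]]]; apply: kfrac_mul; [|apply: kfrac_inv]; exact: kalgT.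
Qed.

Lemma kfrac_common_denom T (I : finType) (a : I -> Om) :
  (forall i, in_kfrac T (a i)) ->
  exists b, [/\ in_kalg T b, b != 0 & forall i, in_kalg T (b * a i)].
Proof.
move=> Ta; have [num [den [Tnum Tden den0 Ea]]] : exists num den,
    [/\ forall i, in_kalg T (num i), forall i, in_kalg T (den i),
        forall i, den i != 0 & forall i, a i = num i / den i].
  have /fin_all_exists [num /fin_all_exists [den H]] := Ta.
  by exists num, den; split=> i; have [] := H i.
exists (\prod_i den i); split; first exact: kalg_prod.
  by rewrite prodf_seq_neq0; apply/allP => i _; exact: den0.
move=> i; rewrite Ea (bigD1 i) //= mulrAC mulrCA mulfV // mulr1.
by apply: kalg_mul => //; exact: kalg_prod.
Qed.

End Subalgebras.

Section AdjoinTranscendental.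
Variables (k : fieldType) (N : nat).
Local Notation tf := (@FracField.tofrac (mpoly k N)).
Local Notation Om := (ratfun k N).
Implicit Types (T : Om -> Prop) (y f w c : Om).

Definition adjoin_unit T w y : Prop := [\/ T y, y = w | y = w^-1].

Lemma kalg_adjoin_unit T w g : w != 0 -> in_kalg (adjoin_unit T w) g ->
  exists r (p : {poly Om}), (forall i, in_kalg T p`_i) /\ g * w ^+ r = p.[w].
Proof.
move=> w0; have const y : in_kalg T y ->
    exists r (p : {poly Om}), (forall i, in_kalg T p`_i) /\ y * w ^+ r = p.[w].
  move=> Ty; exists 0%N, y%:P; rewrite expr0 mulr1 hornerC; split=> // i.
  by rewrite coefC; case: eqP => _ //; exact: (kalg_natr T 0).
elim=> {g} [c|y [Ty | -> | ->] | y z _ [r1 [p [Tp E1]]] _ [r2 [q [Tq E2]]]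
               | y z _ [r1 [p [Tp E1]]] _ [r2 [q [Tq E2]]]].
- exact/const/kalg_const.
- exact/const/kalg_gen.
- by exists 0%N, 'X; rewrite expr0 mulr1 hornerX; split=> // i; rewrite coefX; exact: kalg_natr.
- by exists 1%N, 1; rewrite expr1 mulVf // hornerC; split=> // i; rewrite coef1; exact: kalg_natr.
- exists (r1 + r2)%N, (p * 'X^r2 + q * 'X^r1); split.
    by move=> i; rewrite coefD !coefMXn; apply: kalg_add; case: ifP => _ //; exact: (kalg_natr T 0).
  by rewrite hornerD !hornerM !hornerXn -E1 -E2 exprD mulrDl -!mulrA [w ^+ r2 * _]mulrC.
- exists (r1 + r2)%N, (p * q); split; last by rewrite hornerM -E1 -E2 exprD mulrACA.
  by move=> i; rewrite coefM; apply: kalg_sum => j; exact: kalg_mul.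
Qed.

Definition vars_below M y : Prop := exists2 i : 'I_N, (i < M)%N & y = rvar k i.

Lemma kalg_vars_below M y : in_kalg (vars_below M) y -> exists2 a, mpoly_below M a & y = tf a.
Proof.
elim=> {y} [c | y [i iM ->] | y z _ [a Ha ->] _ [b Hb ->] | y z _ [a Ha ->] _ [b Hb ->]].
- by exists (mconst N c); first exact: mpoly_below_mconst.
- by exists (mvar k N i); first exact: mpoly_below_mvar.
- by exists (a + b); rewrite ?tofracD //; exact: mpoly_belowD.
- by exists (a * b); rewrite ?tofracM //; exact: mpoly_belowM.
Qed.

Lemma kfrac_vars_below_mono M M' f : (M <= M')%N ->
  in_kfrac (vars_below M) f -> in_kfrac (vars_below M') f.
Proof.
move=> MM'; apply: kfrac_sub => _ [i iM ->].
by apply/kfrac_kalg/kalg_gen; exists i; first exact: leq_trans MM'.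
Qed.

Lemma rvar_neq0 (i : 'I_N) : rvar k i != 0.
Proof. by rewrite tofrac_eq0 mvar_neq0. Qed.

Lemma vars_below_transcendental (z : 'I_N) c (h : {poly Om}) :
  in_kfrac (vars_below z) c -> c != 0 -> (forall i, in_kfrac (vars_below z) h`_i) ->
  h.[c * rvar k z] = 0 -> h = 0.
Proof.
move=> Fc c0 Fh hz0; pose a (i : 'I_(size h)) := h`_i * c ^+ i.
have [b [_ b0 Tba]] : exists b, [/\ in_kalg (vars_below z) b, b != 0 &
    forall i, in_kalg (vars_below z) (b * a i)].
  apply: kfrac_common_denom => i; apply: kfrac_mul => //.
  by have := kfrac_expz i%:Z Fc.
have /fin_all_exists2 [al below_al Eal] := fun i => kalg_vars_below (Tba i).
have E : tf (\sum_i al i * mvar k N z ^+ i) = b * h.[c * rvar k z].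
  rewrite rmorph_sum horner_coef mulr_sumr; apply: eq_bigr => i _ /=.
  by rewrite tofracM tofracXn -Eal exprMn !mulrA.
have al0 : forall i, al i = 0.
  apply: (mpoly_below_mvar_indep (ltn_ord z) below_al).
  by apply/eqP; rewrite -tofrac_eq0 E hz0 mulr0.
apply/polyP => i; rewrite coef0; have [lt_ih|] := ltnP i (size h); last exact: nth_default.
have /eqP := Eal (Ordinal lt_ih); rewrite al0 tofrac0 mulf_eq0 (negbTE b0) /a /=.
by rewrite mulf_eq0 expf_eq0 (negbTE c0) andbF orbF => /eqP.
Qed.

Lemma kfrac_adjoin_transcendental T (z : 'I_N) c f :
  (forall y, T y -> in_kfrac (vars_below z) y) ->
  in_kfrac (vars_below z) c -> c != 0 -> in_kfrac (vars_below z) f ->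
  in_kfrac (adjoin_unit T (c * rvar k z)) f -> in_kfrac T f.
Proof.
move=> FT Fc c0 Ff [A [B [TA TB B0 Ef]]]; set w := c * rvar k z.
have w0 : w != 0 by rewrite mulf_neq0 ?rvar_neq0.
have [r1 [p [Tp E1]]] := kalg_adjoin_unit w0 TA.
have [r2 [q [Tq E2]]] := kalg_adjoin_unit w0 TB.
set P := p * 'X^r2; set Q := q * 'X^r1.
have coefT (s : {poly Om}) r i : (forall j, in_kalg T s`_j) -> in_kalg T (s * 'X^r)`_i.
  by move=> Ts; rewrite coefMXn; case: ifP => _; [exact: (kalg_natr T 0) | exact: Ts].
have EQ : f * Q.[w] = P.[w].
  by rewrite !hornerM !hornerXn -E1 -E2 Ef -!mulrA mulKf // (mulrC (w ^+ r2)).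
have Q0 : Q != 0.
  apply: contra_neq B0 => Q0; apply/eqP; move: (congr1 (horner^~ w) Q0).
  rewrite /= hornerM hornerXn -E2 horner0 => /eqP.
  by rewrite !mulf_eq0 !expf_eq0 (negbTE w0) !andbF !orbF.
have /eqP : f *: Q - P = 0.
  apply: (vars_below_transcendental Fc c0); last by rewrite hornerD hornerN hornerZ EQ subrr.
  move=> i; rewrite coefB coefZ; apply: kfrac_add; [apply: kfrac_mul Ff _ | apply: kfrac_opp];
    by apply: (kfrac_sub FT); apply: kfrac_kalg; exact: coefT.
rewrite subr_eq0 => /eqP EfQ.
have lead0 : Q`_(size Q).-1 != 0 by rewrite -lead_coefE lead_coef_eq0.
exists P`_(size Q).-1, Q`_(size Q).-1.
by split; [exact: coefT | exact: coefT | exact: lead0 | rewrite -EfQ coefZ mulfK].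
Qed.

End AdjoinTranscendental.

Section Monomials.
Variables (k : fieldType) (N : nat).
Implicit Types (a b : 'I_N -> int).

Lemma eq_monomial a b : a =1 b -> monomial k a = monomial k b.
Proof. by move=> eq_ab; apply: eq_bigr => v _; rewrite eq_ab. Qed.

Lemma monomialD a b : monomial k (fun v => a v + b v) = monomial k a * monomial k b.
Proof. by rewrite -big_split; apply: eq_bigr => v _; rewrite expfzDr ?rvar_neq0. Qed.

Lemma monomial_delta (p : 'I_N) (z : int) :
  monomial k (fun v => (v == p)%:Z * z) = rvar k p ^ z.
Proof.
rewrite /monomial (bigD1 p) //= eqxx mul1r big1 ?mulr1 // => v /negbTE ->.
by rewrite mul0r expr0z.
Qed.

Lemma monomial_rho_s (s : bool) (i j : 'I_N) :
  monomial k (rho_s (s, i, j)) = if s then rvar k i * rvar k j else (rvar k i * rvar k j)^-1.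
Proof.
pose sgn : int := if s then 1 else -1.
have -> : monomial k (rho_s (s, i, j)) =
          monomial k (fun v => (v == i)%:Z * sgn + (v == j)%:Z * sgn).
  by apply: eq_monomial => v; rewrite /rho_s /= mulrDr !(mulrC sgn).
by rewrite monomialD !monomial_delta /sgn; case: {sgn} s; rewrite ?invfM ?expr1z ?exprN1.
Qed.

End Monomials.

Section AugmentedGraph.
Variables (k : fieldType) (n m : nat).
Variables (S : {set bool * 'I_n * 'I_n}) (d : 'I_m -> 'I_n * 'I_n).
Local Notation N := (n + m)%N.
Local Notation Om := (ratfun k N).
Local Notation xv := (@xv n m).
Local Notation tv := (@tv n m).

Lemma xv_inj : injective xv. Proof. exact: lshift_inj. Qed.
Lemma tv_inj : injective tv. Proof. exact: rshift_inj. Qed.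
Lemma xv_neq_tv i t : (xv i == tv t) = false.
Proof. by apply/negbTE; rewrite -val_eqE /= neq_ltn ltn_addr. Qed.

Lemma eq_ext0 (a : 'I_n -> int) (b : 'I_N -> int) :
  (forall i, b (xv i) = a i) -> (forall t, b (tv t) = 0) -> ext0 a =1 b.
Proof.
by move=> bx bt v; rewrite /ext0; case: split_ordP => [i|t] ->; [rewrite -bx | rewrite -(bt t)].
Qed.

Lemma monomial_ext0_rho_s (e : bool * 'I_n * 'I_n) :
  monomial k (ext0 (rho_s e)) = monomial k (rho_s (e.1.1, xv e.1.2, xv e.2)).
Proof.
apply/eq_monomial/eq_ext0 => [i|t]; first by rewrite /rho_s /= !(inj_eq xv_inj).
by rewrite /rho_s /= ![tv t == _]eq_sym !xv_neq_tv mulr0.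
Qed.

Lemma monomial_ext0_rho_d t :
  monomial k (ext0 (rho_d (d t))) =
  monomial k (rho_s (false, xv (d t).1, tv t)) * monomial k (rho_s (true, tv t, xv (d t).2)).
Proof.
rewrite -monomialD; apply: eq_monomial; apply: eq_ext0 => [i|t'].
  by rewrite /rho_s /rho_d /= !(inj_eq xv_inj) !xv_neq_tv; case: (i == _); case: (i == _).
rewrite /rho_s /= ![tv t' == xv _]eq_sym !xv_neq_tv (inj_eq tv_inj).
by case: (t' == t).
Qed.

Definition uvar t : Om := rvar k (xv (d t).1) * rvar k (tv t).

(* [k(G)] with [u_t^(+-1)] adjoined for the directed edges [t < e]: [e = 0] gives back
   [k(G)] and [e = m] contains [k(G~)]. *)
Definition gens_Gu (e : nat) (y : Om) : Prop :=
  gens_G S d y \/ exists2 t : 'I_m, (t < e)%N & y = uvar t \/ y = (uvar t)^-1.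

Lemma aug_edgesP e : reflect
  [\/ exists2 s, s \in S & e = (s.1.1, xv s.1.2, xv s.2),
       exists t, e = (false, xv (d t).1, tv t) |
       exists t, e = (true, tv t, xv (d t).2)] (e \in aug_edges S d).
Proof.
rewrite inE; apply: (iffP or3P) => [[/existsP [s /andP [Ss /eqP ->]] | /existsP [t /eqP ->]
                                      | /existsP [t /eqP ->]] | [[s Ss ->] | [t ->] | [t ->]]].
- by apply: Or31; exists s.
- by apply: Or32; exists t.
- by apply: Or33; exists t.
- by apply: Or31; apply/existsP; exists s; rewrite Ss eqxx.
- by apply: Or32; apply/existsP; exists t.
- by apply: Or33; apply/existsP; exists t.
Qed.

Lemma gens_G_kalg_aug (y : Om) : gens_G S d y -> in_kalg (gens_aug S d) y.
Proof.
case=> [[s Ss ->] | [t ->]].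
  apply: kalg_gen; rewrite monomial_ext0_rho_s; eexists; last reflexivity.
  by apply/aug_edgesP; apply: Or31; exists s.
rewrite monomial_ext0_rho_d; apply: kalg_mul; apply: kalg_gen; eexists; try reflexivity.
all: apply/aug_edgesP.
  by apply: Or32; exists t.
by apply: Or33; exists t.
Qed.

Lemma gens_aug_kalg_Gu (y : Om) : gens_aug S d y -> in_kalg (gens_Gu m) y.
Proof.
case=> e /aug_edgesP [[s Ss ->] | [t ->] | [t ->]] ->.
- by apply: kalg_gen; left; left; exists s; rewrite ?monomial_ext0_rho_s.
- by apply: kalg_gen; right; exists t => //; right; rewrite monomial_rho_s.
have -> : monomial k (rho_s (true, tv t, xv (d t).2)) = uvar t * monomial k (ext0 (rho_d (d t))).
  by rewrite monomial_ext0_rho_d !monomial_rho_s /uvar mulVKf // mulf_neq0 ?rvar_neq0.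
by apply: kalg_mul; apply: kalg_gen; [right; exists t => //; left | left; right; exists t].
Qed.

Lemma kfrac_x_monomial_ext0 (a : 'I_n -> int) :
  in_kfrac (@gens_x k n m) (monomial k (ext0 a)).
Proof.
apply: kfrac_prod => v; rewrite /ext0; case: split_ordP => [i|t] ->; last first.
  by rewrite expr0z; apply: kfrac_kalg; exact: (kalg_natr _ 1).
by apply/kfrac_expz/kfrac_kalg/kalg_gen; exists i.
Qed.

Lemma gens_G_kfrac_x (y : Om) : gens_G S d y -> in_kfrac (@gens_x k n m) y.
Proof. by case=> [[e _ ->] | [t ->]]; exact: kfrac_x_monomial_ext0. Qed.

Lemma kfrac_x_vars_below (f : Om) :
  in_kfrac (@gens_x k n m) f -> in_kfrac (vars_below n) f.
Proof.
apply: kfrac_sub => y [i ->]; apply/kfrac_kalg/kalg_gen.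
by exists (xv i); first exact: (ltn_ord i).
Qed.

Lemma gens_Gu_vars_below e (y : Om) : gens_Gu e y -> in_kfrac (vars_below (n + e)%N) y.
Proof.
case=> [/gens_G_kfrac_x/kfrac_x_vars_below | [t te Ey]].
  exact/kfrac_vars_below_mono/leq_addr.
have Fu : in_kfrac (vars_below (n + e)%N) (uvar t).
  apply: kfrac_mul; apply/kfrac_kalg/kalg_gen; eexists; try reflexivity; rewrite /=.
    exact: ltn_addr.
  by rewrite ltn_add2l.
by case: Ey => ->; last exact: kfrac_inv.
Qed.

(* [u_e = x_i t_e], and the variable [t_e] occurs neither in [f] nor in the generators
   of [gens_Gu e]. *)
Lemma kfrac_Gu_step e (f : Om) : (e < m)%N -> in_kfrac (vars_below (n + e)%N) f ->
  in_kfrac (gens_Gu e.+1) f -> in_kfrac (gens_Gu e) f.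
Proof.
move=> em Ff Fe; set t := Ordinal em.
have Fx : in_kfrac (vars_below (tv t)) (rvar k (xv (d t).1)).
  apply/kfrac_kalg/kalg_gen; exists (xv (d t).1) => //.
  exact: (ltn_addr e (ltn_ord (d t).1)).
apply: (kfrac_adjoin_transcendental (z := tv t) (@gens_Gu_vars_below e) Fx (rvar_neq0 _ _) Ff).
apply: kfrac_sub Fe => y [Gy | [t' t'e Ey]]; apply/kfrac_kalg/kalg_gen.
  by apply: Or31; left.
have [lt_t'e | ge_t'e] := ltnP t' e; first by apply: Or31; right; exists t'.
have eq_t't : t' = t by apply: val_inj; apply/eqP; rewrite eqn_leq -ltnS t'e.
by rewrite eq_t't in Ey; case: Ey => ->; [apply: Or32 | apply: Or33].
Qed.

Lemma kfrac_Gu_G e (f : Om) : (e <= m)%N -> in_kfrac (vars_below n) f ->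
  in_kfrac (gens_Gu e) f -> in_kfrac (gens_G S d) f.
Proof.
move=> + Ff; elim: e => [_ | e IH em Fe].
  by apply: kfrac_sub => y [Gy | [t]]; [exact/kfrac_kalg/kalg_gen | rewrite ltn0].
apply: IH (ltnW em) _; apply: kfrac_Gu_step em _ Fe.
exact/(kfrac_vars_below_mono (leq_addr e n)).
Qed.

End AugmentedGraph.

Theorem mainTheorem7 (k : fieldType) (n m : nat)
  (S : {set bool * 'I_n * 'I_n}) (d : 'I_m -> 'I_n * 'I_n) :
  mixed_graph_wf S d ->
  forall f : ratfun k (n + m),
    (in_kfrac (@gens_aug k n m S d) f /\ in_kfrac (@gens_x k n m) f)
    <-> in_kfrac (@gens_G k n m S d) f.
Proof.
move=> _ f; split=> [[Faug Fx] | FG].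
  apply: (kfrac_Gu_G (leqnn m) (kfrac_x_vars_below Fx)).
  by apply: kfrac_sub Faug => y /gens_aug_kalg_Gu /kfrac_kalg.
split; apply: kfrac_sub FG => y; first by move/gens_G_kalg_aug/kfrac_kalg.
exact: gens_G_kfrac_x.
Qed.
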